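(* Let $F\in\mathbb{R}[x_1,\dots,x_n]$ be a form of degree $d$ with $F(X)>0$ for all $X\in\mathbb{T}_n=\{(x_1,\dots,x_n): x_i\ge0,\ \sum_i x_i=1\}$. Then there exists $M$ such that for every $m\ge M$ and every choice of $B_{[\alpha_1]},\dots,B_{[\alpha_m]}\in PW_n$, the form $F(B_{[\alpha_1]}\cdots B_{[\alpha_m]}X^{\mathrm{Tr}})$ is nonlacunary and trivially positive, i.e., every monomial $x_1^{i_1}\cdots x_n^{i_n}$ with $i_1+\cdots+i_n=d$ occurs in it with a strictly positive coefficient.
   Context: $W_n$ is the $n\times n$ matrix with $(W_n)_{ij}=1/j$ for $i\le j$ and $0$ for $i>j$. For a permutation $[k_1\cdots k_n]$ of $1,\dots,n$, $P_{[k_1\cdots k_n]}$ is the permutation matrix with $1$ in positions $(i,k_i)$ and $0$ elsewhere, and $B_{[k_1\cdots k_n]}=P_{[k_1\cdots k_n]}W_n$; $PW_n$ denotes the set of these $n!$ matrices. $X=(x_1,\dots,x_n)$. *)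

From HB Require Import structures.
From mathcomp Require Import all_boot all_order all_algebra all_fingroup.
From mathcomp Require Import reals.
From mathcomp Require Import mpoly.
Set Implicit Arguments. Unset Strict Implicit. Unset Printing Implicit Defensive.
Import Order.TTheory GRing.Theory Num.Theory.
Local Open Scope ring_scope.

(* W_n : (W_n)_{ij} = 1/j for i <= j, 0 otherwise (1-based indices);
   with 0-based ordinals i j : 'I_n this is 1/(j+1) when i <= j. *)
Definition Wmx (R : realType) (n : nat) : 'M[R]_n :=
  \matrix_(i < n, j < n) (if (i <= j)%N then (j.+1%:R)^-1 else 0).

(* P_[k_1...k_n] = permutation matrix with 1 at (i, k_i):
   perm_mx s has entry (i,j) = (s i == j). *)
Definition Bmx (R : realType) (n : nat) (s : 'S_n) : 'M[R]_n :=
  perm_mx s *m Wmx R n.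

Definition PW (R : realType) (n : nat) : pred 'M[R]_n :=
  fun B => [exists s : 'S_n, B == @Bmx R n s].

Definition mxprod (R : realType) (n : nat) (l : seq 'M[R]_n) : 'M[R]_n :=
  foldr (fun A B => A *m B) 1%:M l.

(* F(A X^Tr): substitute x_i := sum_j A_{ij} x_j *)
Definition linsubst (R : realType) (n : nat) (A : 'M[R]_n) (F : {mpoly R[n]})
  : {mpoly R[n]} :=
  F \mPo [tuple \sum_(j < n) (A i j)%:MP * 'X_j | i < n].

Definition in_simplex (R : realType) (n : nat) (x : 'I_n -> R) : Prop :=
  (forall i, 0 <= x i) /\ \sum_(i < n) x i = 1.

From HB Require Import structures.
From mathcomp Require Import all_boot all_order all_algebra all_fingroup.
From mathcomp Require Import reals.
From mathcomp Require Import mpoly.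
From mathcomp Require Import ring lra.
From mathcomp Require classical_sets topology normedtype matrix_normedtype realfun derive.
Import Order.TTheory GRing.Theory Num.Theory.
Local Open Scope ring_scope.
Set Implicit Arguments. Unset Strict Implicit. Unset Printing Implicit Defensive.

(* Every product [Q = B_1 ... B_m] of matrices of PW_n is column stochastic, and right
   multiplication by [B_s] replaces the entries of each row by its averages over a nested
   family of index sets; this shrinks the oscillation of every row by the factor [1 - 1/n],
   so the rows of [Q] are constant up to [n/(n+m)].  Hence [Q] is close to the matrix [P]
   all of whose columns equal the first column [q] of [Q], a point of T_n.  As [F] is a form
   of degree [d], [F(PX) = F(q) (x_1 + ... + x_n)^d] has all its coefficients at least
   [F(q) >= min_{T_n} F > 0], while the l1 norm of the coefficients is submultiplicative, so
   the coefficients of [F(QX) - F(PX)] are O(1/(n+m)). *)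

Section MpolyNorm1.
Variables (R : numDomainType) (n : nat).
Implicit Types (p q : {mpoly R[n]}) (m : 'X_{1..n}).

Definition mnorm1 p : R := \sum_(m <- msupp p) `|p@_m|.

Lemma mnorm1E_seq p (r : seq 'X_{1..n}) : uniq r -> {subset msupp p <= r} ->
  mnorm1 p = \sum_(m <- r) `|p@_m|.
Proof.
move=> r_uniq supp_r; rewrite /mnorm1 [RHS](bigID (mem (msupp p))) /=.
rewrite [X in _ + X]big1 ?addr0; last by move=> m /memN_msupp_eq0 ->; rewrite normr0.
rewrite -[RHS]big_filter; apply: perm_big; apply: uniq_perm; rewrite ?msupp_uniq ?filter_uniq //.
by move=> m; rewrite mem_filter; case: (boolP (m \in msupp p)) => // /supp_r ->.
Qed.

Lemma mnorm1_ge0 p : 0 <= mnorm1 p.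
Proof. exact: sumr_ge0. Qed.

Lemma ler_mcoeff_mnorm1 p m : `|p@_m| <= mnorm1 p.
Proof.
have [mp|mNp] := boolP (m \in msupp p); last by rewrite memN_msupp_eq0 ?normr0 ?mnorm1_ge0.
by rewrite /mnorm1 (bigD1_seq m mp (msupp_uniq p)) /= lerDl sumr_ge0.
Qed.

Lemma mnorm1_0 : mnorm1 0 = 0.
Proof. by rewrite /mnorm1 msupp0 big_nil. Qed.

Lemma mnorm1_1 : mnorm1 1 = 1.
Proof. by rewrite /mnorm1 msupp1 big_seq1 mcoeff1 eqxx normr1. Qed.

Lemma mnorm1X m : mnorm1 'X_[m] = 1.
Proof. by rewrite /mnorm1 msuppX big_seq1 mcoeffX eqxx normr1. Qed.

Lemma mnorm1Z c p : mnorm1 (c *: p) = `|c| * mnorm1 p.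
Proof.
rewrite (@mnorm1E_seq (c *: p) (msupp p)) ?msupp_uniq //; last exact: msuppZ_le.
by rewrite /mnorm1 mulr_sumr; apply: eq_bigr => m _; rewrite mcoeffZ normrM.
Qed.

Lemma mnorm1D p q : mnorm1 (p + q) <= mnorm1 p + mnorm1 q.
Proof.
pose r := undup (msupp p ++ msupp q ++ msupp (p + q)).
rewrite !(@mnorm1E_seq _ r) ?undup_uniq //;
  try by move=> m; rewrite mem_undup !mem_cat => ->; rewrite ?orbT.
rewrite -big_split; apply: ler_sum => m _; rewrite mcoeffD; exact: ler_normD.
Qed.

Lemma mnorm1_sum (I : Type) (r : seq I) (f : I -> {mpoly R[n]}) :
  mnorm1 (\sum_(i <- r) f i) <= \sum_(i <- r) mnorm1 (f i).
Proof.
elim: r => [|i r IHr]; first by rewrite !big_nil mnorm1_0.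
by rewrite !big_cons (le_trans (mnorm1D _ _)) ?lerD.
Qed.

Lemma mnorm1M p q : mnorm1 (p * q) <= mnorm1 p * mnorm1 q.
Proof.
rewrite {1}(mpolyE p) {1}(mpolyE q) mulr_suml (le_trans (mnorm1_sum _ _)) //.
rewrite /mnorm1 mulr_suml; apply: ler_sum => a _.
rewrite mulr_sumr (le_trans (mnorm1_sum _ _)) // mulr_sumr; apply: ler_sum => b _.
by rewrite -scalerAl -scalerAr scalerA -mpolyXD mnorm1Z mnorm1X mulr1 normrM.
Qed.

Lemma mnorm1_prod (I : Type) (r : seq I) (f : I -> {mpoly R[n]}) (K : R) :
  (forall i, mnorm1 (f i) <= K) -> mnorm1 (\prod_(i <- r) f i) <= K ^+ size r.
Proof.
move=> fK; elim: r => [|i r IHr]; first by rewrite big_nil mnorm1_1.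
rewrite big_cons exprS (le_trans (mnorm1M _ _)) //.
by rewrite ler_pM ?mnorm1_ge0.
Qed.

Lemma mnorm1_prodB (I : Type) (r : seq I) (f g : I -> {mpoly R[n]}) (K e : R) :
  (forall i, mnorm1 (f i) <= K) -> (forall i, mnorm1 (g i) <= K) ->
  (forall i, mnorm1 (f i - g i) <= e) ->
  mnorm1 (\prod_(i <- r) f i - \prod_(i <- r) g i) <= (size r)%:R * e * K ^+ (size r).-1.
Proof.
move=> fK gK fge; elim: r => [|i r IHr]; first by rewrite !big_nil subrr mnorm1_0 mul0r mul0r.
rewrite !big_cons.
have -> : f i * \prod_(j <- r) f j - g i * \prod_(j <- r) g j =
  (f i - g i) * \prod_(j <- r) f j + g i * (\prod_(j <- r) f j - \prod_(j <- r) g j).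
  by rewrite mulrBl mulrBr addrA subrK.
rewrite (le_trans (mnorm1D _ _)) // (le_trans (lerD (mnorm1M _ _) (mnorm1M _ _))) //.
have first_le : mnorm1 (f i - g i) * mnorm1 (\prod_(j <- r) f j) <= e * K ^+ size r.
  by rewrite ler_pM ?mnorm1_ge0 ?mnorm1_prod.
have rest_le : mnorm1 (g i) * mnorm1 (\prod_(j <- r) f j - \prod_(j <- r) g j) <=
    (size r)%:R * e * K ^+ size r.
  case: r IHr {first_le} => [|j r] IHr; first by rewrite !big_nil subrr mnorm1_0 mulr0 !mul0r.
  by rewrite exprS mulrCA ler_pM ?mnorm1_ge0.
by rewrite (le_trans (lerD first_le rest_le)) //= -nat1r !mulrDl mul1r.
Qed.

End MpolyNorm1.

Lemma prod_m2s (R : comSemiRingType) n (f : 'I_n -> R) (m : 'X_{1..n}) :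
  \prod_(i <- m2s m) f i = \prod_i f i ^+ m i.
Proof.
rewrite /m2s big_flatten big_map big_enum /=; apply: eq_bigr => i _.
by rewrite big_nseq iter_mulr mulr1.
Qed.

Lemma mnorm1_linear (R : numDomainType) n (c : 'I_n -> R) (b : R) :
  (forall j, `|c j| <= b) -> mnorm1 (\sum_(j < n) (c j)%:MP * 'X_j) <= n%:R * b.
Proof.
move=> c_le; rewrite (le_trans (mnorm1_sum _ _)) // -[n in n%:R]card_ord mulr_natl.
by rewrite -sumr_const ler_sum // => j _; rewrite mul_mpolyC mnorm1Z mnorm1X mulr1.
Qed.

Lemma mnorm1_comp_mpolyB (R : numDomainType) n k d (F : {mpoly R[n]})
    (t u : n.-tuple {mpoly R[k]}) (K e : R) :
  F \is d.-homog ->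
  (forall i, mnorm1 (tnth t i) <= K) -> (forall i, mnorm1 (tnth u i) <= K) ->
  (forall i, mnorm1 (tnth t i - tnth u i) <= e) ->
  mnorm1 ((F \mPo t) - (F \mPo u)) <= mnorm1 F * (d%:R * e * K ^+ d.-1).
Proof.
move=> /dhomog_mf homF tK uK tue; rewrite !comp_mpolyE -sumrB.
rewrite (le_trans (mnorm1_sum _ _)) // [mnorm1 F]/mnorm1 mulr_suml !big_seq.
apply: ler_sum => m /homF degm; rewrite -scalerBr mnorm1Z ler_wpM2l //.
by rewrite -!prod_m2s -degm; have := mnorm1_prodB (m2s m) tK uK tue; rewrite size_m2s.
Qed.

Section SumOfVariables.
Variables (R : numDomainType) (n : nat).

Lemma mcoeffM_ge0 (p q : {mpoly R[n]}) :
  (forall m, 0 <= p@_m) -> (forall m, 0 <= q@_m) -> forall m, 0 <= (p * q)@_m.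
Proof. by move=> p_ge0 q_ge0 m; rewrite mcoeffM sumr_ge0 // => k _; rewrite mulr_ge0. Qed.

Definition msumX : {mpoly R[n]} := \sum_(i < n) 'X_i.

Lemma mcoeff_msumX_exp_ge0 d (m : 'X_{1..n}) : 0 <= (msumX ^+ d)@_m.
Proof.
elim: d m => [|d IHd] m; first by rewrite expr0 mcoeff1 ler0n.
rewrite exprS mcoeffM_ge0 // => m'.
by rewrite /msumX raddf_sum /= sumr_ge0 // => i _; rewrite mcoeffX ler0n.
Qed.

(* The coefficient is a multinomial coefficient: peel off one variable occurring in [m]. *)
Lemma mcoeff_msumX_exp_ge1 d (m : 'X_{1..n}) : mdeg m = d -> 1 <= (msumX ^+ d)@_m.
Proof.
elim: d m => [|d IHd] m degm.
  by move/eqP: degm; rewrite mdeg_eq0 => /eqP ->; rewrite expr0 mcoeff1 eqxx.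
have [i mi_gt0] : exists i, (0 < m i)%N.
  case: (pickP (fun i => 0 < m i)%N) => [i|m0]; first by exists i.
  by move: degm; rewrite mdegE big1 // => i _; apply/eqP; rewrite -leqn0 leqNgt m0.
have m_eq : m = (U_(i) + (m - U_(i)))%MM.
  rewrite addmC submK //; apply/mnm_lepP => j; rewrite mnm1E.
  by case: eqP => [<-|].
have deg_rest : mdeg (m - U_(i))%MM = d.
  by move: degm; rewrite {1}m_eq mdegD mdeg1 add1n => -[].
rewrite exprSr /msumX mulr_sumr raddf_sum /= (bigD1 i) //= m_eq mcoeffMX.
rewrite -[1]addr0 lerD ?IHd // sumr_ge0 // => j _.
by rewrite mcoeffM_ge0 // => m'; rewrite ?mcoeff_msumX_exp_ge0 // mcoeffX ler0n.
Qed.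

End SumOfVariables.

Section Average.
Variables (R : realFieldType) (T : finType).
Implicit Types (S : {set T}) (v : T -> R).

Definition avg S v : R := #|S|%:R^-1 * \sum_(k in S) v k.

Lemma avg_dist S v (c e : R) : S != set0 -> {in S, forall k, `|v k - c| <= e} ->
  `|avg S v - c| <= e.
Proof.
move=> S_neq0 vc; have S_gt0 : 0 < #|S|%:R :> R by rewrite ltr0n card_gt0.
have -> : avg S v - c = #|S|%:R^-1 * \sum_(k in S) (v k - c).
  by rewrite /avg sumrB sumr_const -mulr_natr; field; rewrite gt_eqF.
rewrite normrM gtr0_norm ?invr_gt0 // ler_pdivrMl // mulr_natl -sumr_const.
exact: le_trans (ler_norm_sum _ _ _) (ler_sum _ vc).
Qed.

Lemma avg_subset_dist S S' v (e : R) : S \subset S' -> S != set0 ->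
  {in S' &, forall k l, `|v k - v l| <= e} ->
  `|avg S v - avg S' v| <= e * (1 - #|S'|%:R^-1).
Proof.
move=> sub_SS' S_neq0 osc_v.
have S_gt0 : (0 < #|S|)%N by rewrite card_gt0.
have S'_gt0 : 0 < #|S'|%:R :> R by rewrite ltr0n (leq_trans S_gt0) ?subset_leq_card.
have e_ge0 : 0 <= e.
  by have /set0Pn [k kS] := S_neq0; rewrite (le_trans _ (osc_v k k _ _)) ?(subsetP sub_SS').
have -> : avg S v - avg S' v = #|S'|%:R^-1 * \sum_(k in S' :\: S) (avg S v - v k).
  rewrite sumrB sumr_const /avg [\sum_(k in S') _](big_setID S) /= (setIidPr sub_SS').
  rewrite -[_ *+ #|S' :\: S|]mulr_natr cardsD (setIidPr sub_SS') natrB ?subset_leq_card //.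
  by field; rewrite !pnatr_eq0 -!lt0n S_gt0 -(ltr0n R) S'_gt0.
have D_le : #|S' :\: S|%:R <= #|S'|%:R - 1 :> R.
  by rewrite cardsD (setIidPr sub_SS') natrB ?subset_leq_card // lerD2l lerN2 ler1n.
have avg_near k : k \in S' :\: S -> `|avg S v - v k| <= e.
  rewrite inE => /andP [_ kS']; apply: avg_dist => // l lS.
  by apply: osc_v => //; apply: (subsetP sub_SS').
have -> : e * (1 - #|S'|%:R^-1) = #|S'|%:R^-1 * (e * (#|S'|%:R - 1)).
  by field; rewrite gt_eqF.
rewrite normrM gtr0_norm ?invr_gt0 //; apply: ler_wpM2l; first by rewrite invr_ge0 ltW.
rewrite (le_trans (ler_norm_sum _ _ _)) // (le_trans (ler_sum _ avg_near)) //.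
by rewrite sumr_const -[e *+ _]mulr_natr; apply: ler_wpM2l.
Qed.
End Average.

Section ColumnStochastic.
Variables (R : numDomainType) (n : nat).

Definition col_stochastic (A : 'M[R]_n) :=
  (forall i j, 0 <= A i j) /\ (forall j, \sum_i A i j = 1).

Lemma col_stochastic1 : col_stochastic 1%:M.
Proof.
split=> [i j|j]; first by rewrite mxE ler0n.
by rewrite (bigD1 j) //= mxE eqxx big1 ?addr0 // => i /negbTE ij; rewrite mxE ij.
Qed.

Lemma col_stochasticM A B : col_stochastic A -> col_stochastic B -> col_stochastic (A *m B).
Proof.
move=> [A_ge0 A_sum] [B_ge0 B_sum]; split=> [i j|j].
  by rewrite mxE sumr_ge0 // => k _; rewrite mulr_ge0.
under eq_bigr do rewrite mxE.
rewrite exchange_big -[RHS](B_sum j) /=; apply: eq_bigr => k _.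
by rewrite -mulr_suml A_sum mul1r.
Qed.

Lemma col_stochastic_le1 A i j : col_stochastic A -> A i j <= 1.
Proof.
by move=> [A_ge0 A_sum]; rewrite -(A_sum j) (bigD1 i) //= lerDl sumr_ge0.
Qed.

Lemma col_stochastic_perm_mx (s : 'S_n) : col_stochastic (perm_mx s : 'M[R]_n).
Proof.
split=> [i j|j]; first by rewrite !mxE ler0n.
rewrite (bigD1 ((s^-1)%g j)) //= !mxE permKV eqxx big1 ?addr0 // => i ij.
by rewrite !mxE; case: eqP => // si_j; case/eqP: ij; rewrite -si_j permK.
Qed.

End ColumnStochastic.

Section RowOscillation.
Variables (R : realDomainType) (n : nat).

Definition row_osc_le (A : 'M[R]_n) (e : R) := forall i j j', `|A i j - A i j'| <= e.

Lemma row_osc_le_col_stochastic A : col_stochastic A -> row_osc_le A 1.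
Proof.
move=> A_stoch i j j'; have [A_ge0 _] := A_stoch.
have := col_stochastic_le1 i j A_stoch; have := col_stochastic_le1 i j' A_stoch.
by have := A_ge0 i j; have := A_ge0 i j'; rewrite ler_norml; lra.
Qed.

End RowOscillation.

Lemma expr_1subVn_le (R : realFieldType) n m : (0 < n)%N ->
  (1 - n%:R^-1) ^+ m <= n%:R / (n + m)%:R :> R.
Proof.
move=> n_gt0; have n_pos : 0 < n%:R :> R by rewrite ltr0n.
elim: m => [|m IHm]; first by rewrite addn0 expr0 divff ?gt_eqF.
have c_ge0 : 0 <= 1 - n%:R^-1 :> R by rewrite subr_ge0 invf_le1 // ler1n.
rewrite exprS (le_trans (ler_wpM2l c_ge0 IHm)) // addnS -addn1 !natrD.
have m_ge0 : 0 <= m%:R :> R by [].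
have -> : (1 - n%:R^-1) * (n%:R / (n%:R + m%:R)) = (n%:R - 1) / (n%:R + m%:R) :> R.
  by field; rewrite !gt_eqF ?ltr_wpDr.
rewrite ler_pdivrMr ?ltr_wpDr // mulrAC ler_pdivlMr ?ltr_wpDr ?addr_ge0 //.
nra.
Qed.

Lemma card_ord_le n (j : 'I_n) : #|[set l : 'I_n | (l <= j)%N]| = j.+1.
Proof.
rewrite -sum1_card (eq_bigl (fun l : 'I_n => (l < j.+1)%N)) => [|l]; last by rewrite inE.
by rewrite -(big_ord_widen n (fun=> 1%N) (ltn_ord j)) sum1_card card_ord.
Qed.

Lemma card_perm_le n (s : 'S_n) (j : 'I_n) : #|[set k | (s k <= j)%N]| = j.+1.
Proof.
have -> : [set k | (s k <= j)%N] = s @^-1: [set l : 'I_n | (l <= j)%N].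
  by apply/setP => k; rewrite !inE.
by rewrite card_preimset ?card_ord_le //; exact: perm_inj.
Qed.

Section PWMatrices.
Variables (R : realType) (n : nat).

Lemma col_stochastic_Wmx : col_stochastic (Wmx R n).
Proof.
split=> [i j|j]; first by rewrite mxE; case: ifP; rewrite ?invr_ge0 ?ler0n.
under eq_bigr do rewrite mxE.
rewrite -big_mkcond /= -(big_ord_widen n (fun=> j.+1%:R^-1) (ltn_ord j)).
by rewrite sumr_const card_ord -[_ *+ j.+1]mulr_natl mulfV ?pnatr_eq0.
Qed.

Lemma col_stochastic_mxprod (l : seq 'M[R]_n) :
  all (@PW R n) l -> col_stochastic (mxprod l).
Proof.
elim: l => [|B l IHl] /=; first by move=> _; exact: col_stochastic1.
case/andP=> /existsP [s /eqP ->] /IHl l_stoch.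
apply: col_stochasticM l_stoch; apply: col_stochasticM.
  exact: col_stochastic_perm_mx.
exact: col_stochastic_Wmx.
Qed.

Lemma mulmx_Bmx (A : 'M[R]_n) (s : 'S_n) i j :
  (A *m Bmx R s) i j = avg [set k | (s k <= j)%N] (A i).
Proof.
rewrite mxE /avg card_perm_le mulr_sumr [RHS]big_mkcond /=; apply: eq_bigr => k _.
rewrite /Bmx -row_permE !mxE inE; case: ifP => _; first by rewrite mulrC.
by rewrite mulr0.
Qed.

Lemma row_osc_le_mulmx_Bmx (A : 'M[R]_n) (s : 'S_n) (e : R) :
  row_osc_le A e -> row_osc_le (A *m Bmx R s) (e * (1 - n%:R^-1)).
Proof.
move=> A_osc i.
suff le_case (j j' : 'I_n) : (j <= j')%N ->
    `|(A *m Bmx R s) i j - (A *m Bmx R s) i j'| <= e * (1 - n%:R^-1).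
  by move=> j j'; case: (leqP j j') => [/le_case //|/ltnW/le_case]; rewrite distrC.
move=> le_jj'; rewrite !mulmx_Bmx.
have e_ge0 : 0 <= e := le_trans (normr_ge0 _) (A_osc i j j).
apply: le_trans (avg_subset_dist _ _ _) _.
- by apply/subsetP => k; rewrite !inE => /leq_trans; apply.
- by rewrite -card_gt0 card_perm_le.
- by move=> k l _ _; exact: A_osc.
have n_gt0 : (0 < n)%N := leq_ltn_trans (leq0n j) (ltn_ord j).
by rewrite card_perm_le ler_wpM2l // lerD2l lerN2 lef_pV2 ?posrE ?ltr0n // ler_nat.
Qed.

Lemma row_osc_le_mxprod (A : 'M[R]_n) (l : seq 'M[R]_n) (e : R) :
  row_osc_le A e -> all (@PW R n) l ->
  row_osc_le (A *m mxprod l) (e * (1 - n%:R^-1) ^+ size l).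
Proof.
elim: l A e => [|B l IHl] A e A_osc /=; first by rewrite mulmx1 expr0 mulr1.
case/andP=> /existsP [s /eqP ->] l_PW.
by rewrite mulmxA exprS mulrA; apply: IHl l_PW; apply: row_osc_le_mulmx_Bmx.
Qed.

End PWMatrices.

Section LinearSubstitution.
Variables (R : realType) (n d : nat) (F : {mpoly R[n]}).
Hypothesis homF : F \is d.-homog.

Lemma linsubst_const_rows (P : 'M[R]_n) (p : 'I_n -> R) :
  (forall i j, P i j = p i) -> linsubst P F = F.@[p]%:MP * msumX R n ^+ d.
Proof.
move=> P_rows; rewrite /linsubst comp_mpolyE mevalE rmorph_sum mulr_suml.
apply: eq_big_seq => m /(dhomog_mf homF) degm.
have -> : \prod_i tnth [tuple \sum_(j < n) (P i j)%:MP * 'X_j | i < n] i ^+ m i =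
    \prod_i ((p i ^+ m i)%:MP * msumX R n ^+ m i).
  apply: eq_bigr => i _; rewrite tnth_mktuple.
  under eq_bigr do rewrite P_rows.
  by rewrite -mulr_sumr exprMn rmorphXn.
rewrite big_split /= -rmorph_prod prodrXr -mdegE degm.
by rewrite -mul_mpolyC mulrA -rmorphM.
Qed.

Lemma mnorm1_linsubstB (Q P : 'M[R]_n) (e : R) :
  (forall i j, `|Q i j| <= 1) -> (forall i j, `|P i j| <= 1) ->
  (forall i j, `|Q i j - P i j| <= e) ->
  mnorm1 (linsubst Q F - linsubst P F) <= mnorm1 F * (d%:R * (n%:R * e) * n%:R ^+ d.-1).
Proof.
move=> Q_le1 P_le1 QP_le; apply: mnorm1_comp_mpolyB => // i; rewrite !tnth_mktuple.
- by rewrite -[X in _ <= X]mulr1 mnorm1_linear.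
- by rewrite -[X in _ <= X]mulr1 mnorm1_linear.
rewrite -sumrB; under eq_bigr do rewrite -mulrBl -raddfB.
exact: mnorm1_linear.
Qed.

(* [F(QX)] is compared with [F(PX) = F(q) (x_1 + ... + x_n)^d], where every column of [P]
   is the column [q] of [Q]. *)
Lemma mcoeff_linsubst_ge (Q : 'M[R]_n) (e : R) (j0 : 'I_n) (mon : 'X_{1..n}) :
  col_stochastic Q -> row_osc_le Q e -> mdeg mon = d ->
  0 <= F.@[fun i => Q i j0] ->
  F.@[fun i => Q i j0] - mnorm1 F * (d%:R * (n%:R * e) * n%:R ^+ d.-1) <=
    (linsubst Q F)@_mon.
Proof.
move=> Q_stoch Q_osc deg_mon Fq_ge0.
pose P : 'M[R]_n := \matrix_(i, j) Q i j0.
have Q_le1 i j : `|Q i j| <= 1.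
  by rewrite ger0_norm ?col_stochastic_le1 //; case: Q_stoch.
have -> : (linsubst Q F)@_mon =
    (linsubst P F)@_mon + (linsubst Q F - linsubst P F)@_mon.
  by rewrite mcoeffB addrC subrK.
apply: lerD.
  rewrite (@linsubst_const_rows P (fun i => Q i j0)) => [|i j]; last by rewrite mxE.
  by rewrite mcoeffCM ler_peMr // mcoeff_msumX_exp_ge1.
rewrite lerNl (le_trans (ler_norm _)) // normrN (le_trans (ler_mcoeff_mnorm1 _ _)) //.
by apply: mnorm1_linsubstB => // [i j|i j]; rewrite mxE.
Qed.

End LinearSubstitution.

Section SimplexMinimum.
Import classical_sets topology normedtype matrix_normedtype realfun derive.
Import numFieldNormedType.Exports.
Local Open Scope classical_set_scope.
Variables (R : realType) (n : nat).

Lemma continuous_meval (F : {mpoly R[n]}) : continuous (fun v : 'rV[R]_n => F.@[v ord0]).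
Proof.
have -> : (fun v : 'rV[R]_n => F.@[v ord0]) =
    (fun v => \sum_(m <- msupp F) F@_m * \prod_i v ord0 i ^+ m i).
  by apply: boolp.funext => v; rewrite mevalE.
apply: continuous_big => [|m _]; first exact: add_continuous.
move=> v; apply: continuousM; first exact: cst_continuous.
move: v; apply: continuous_big => [|i _]; first exact: mul_continuous.
move=> v; apply: (continuous_comp (f := fun x : 'rV[R]_n => x ord0 i)
  (g := fun x : R => x ^+ m i)); [exact: coord_continuous | exact: exprn_continuous].
Qed.

Lemma compact_simplex : compact [set v : 'rV[R]_n | in_simplex (v ord0)].
Proof.
apply: (@subclosed_compact _ _ [set v : 'rV[R]_n | forall i, `[0, 1]%classic (v ord0 i)]).
- have -> : [set v : 'rV[R]_n | in_simplex (v ord0)] =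
      \bigcap_(i in setT) ((fun v : 'rV[R]_n => v ord0 i) @^-1` [set x | 0 <= x]) `&`
      ((fun v : 'rV[R]_n => \sum_i v ord0 i) @^-1` [set 1]).
    apply/seteqP; split=> v [v_ge0 v_sum]; split=> //.
      by move=> i _; exact: v_ge0.
    by move=> i; exact: (v_ge0 i I).
  apply: closedI.
    apply: closed_bigI => i _; apply: closed_comp => [v _|]; last exact: closed_ge.
    exact: coord_continuous.
  apply: closed_comp => [v _|]; last exact: closed_eq.
  by apply: continuous_big => [|i _]; [exact: add_continuous | exact: coord_continuous].
- exact: (@rV_compact R n (fun=> `[0, 1]%classic) (fun=> @segment_compact R 0 1)).
- move=> v [v_ge0 v_sum] i /=; rewrite in_itv /= v_ge0 -v_sum.
  by rewrite (bigD1 i) //= lerDl sumr_ge0.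
Qed.

Lemma simplex_min_gt0 (F : {mpoly R[n]}) : (0 < n)%N ->
  (forall x, in_simplex x -> 0 < F.@[x]) ->
  exists2 mu : R, 0 < mu & forall x, in_simplex x -> mu <= F.@[x].
Proof.
move=> n_gt0 F_pos.
have simplex_neq0 : [set v : 'rV[R]_n | in_simplex (v ord0)] !=set0.
  exists (\row_i (i == Ordinal n_gt0)%:R); split=> [i|]; first by rewrite mxE ler0n.
  by rewrite (bigD1 (Ordinal n_gt0)) //= mxE eqxx big1 ?addr0 // => i /negbTE; rewrite mxE => ->.
have [c c_simplex c_min] := EVT_min_rV simplex_neq0 compact_simplex
  (continuous_subspaceT (@continuous_meval F)).
exists F.@[c ord0]; first by apply: F_pos; rewrite inE in c_simplex.
move=> x x_simplex; have := c_min (\row_i x i); rewrite inE.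
have row_x : (\row_i x i) ord0 =1 x by move=> i; rewrite mxE.
rewrite (meval_eq _ row_x); apply; rewrite /= /in_simplex.
under eq_bigr do rewrite row_x.
by split=> [i|]; rewrite ?row_x; case: x_simplex.
Qed.

End SimplexMinimum.

Unset Implicit Arguments.

Theorem corollary4p1 (R : realType) (n d : nat) (F : {mpoly R[n]}) :
  (0 < n)%N ->
  F \is d.-homog ->
  (forall x : 'I_n -> R, in_simplex x -> 0 < F.@[x]) ->
  exists M : nat, forall m : nat, (M <= m)%N ->
    forall Bs : seq 'M[R]_n, size Bs = m -> all (@PW R n) Bs ->
      forall mon : 'X_{1..n}, mdeg mon = d ->
        0 < (linsubst (mxprod Bs) F)@_mon.
Proof.
move=> n_gt0 homF F_pos.
have [mu mu_gt0 F_ge_mu] := simplex_min_gt0 n_gt0 F_pos.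
pose C := mnorm1 F * (d%:R * n%:R * n%:R ^+ d.-1) * n%:R.
have [M C_lt] : exists M : nat, C < mu * M%:R.
  have C_ge0 : 0 <= C by rewrite /C !mulr_ge0 ?mnorm1_ge0 ?exprn_ge0 ?ler0n.
  exists (Num.Def.archi_bound (C / mu)).
  by rewrite -ltr_pdivrMl // mulrC; apply: archi_boundP; rewrite divr_ge0 // ltW.
exists M => m le_Mm Bs size_Bs Bs_PW mon deg_mon.
have nm_gt0 : 0 < (n + m)%:R :> R by rewrite ltr0n addn_gt0 n_gt0.
have Q_stoch := col_stochastic_mxprod Bs_PW.
have Q_osc : row_osc_le (mxprod Bs) (n%:R / (n + m)%:R).
  have := row_osc_le_mxprod (row_osc_le_col_stochastic (col_stochastic1 R n)) Bs_PW.
  rewrite mul1mx mul1r size_Bs => osc_le i j j'.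
  exact: le_trans (osc_le i j j') (expr_1subVn_le _ _ n_gt0).
pose j0 := Ordinal n_gt0.
have q_simplex : in_simplex (fun i => mxprod Bs i j0) by case: Q_stoch.
apply: lt_le_trans (mcoeff_linsubst_ge homF Q_stoch Q_osc deg_mon (ltW (F_pos _ q_simplex))).
rewrite subr_gt0 (lt_le_trans _ (F_ge_mu _ q_simplex)) //.
have -> : mnorm1 F * (d%:R * (n%:R * (n%:R / (n + m)%:R)) * n%:R ^+ d.-1) = C / (n + m)%:R.
  by rewrite /C; field; rewrite -natrD (gt_eqF nm_gt0).
rewrite ltr_pdivrMr // (lt_le_trans C_lt) //.
by apply: ler_wpM2l; [exact: ltW | rewrite ler_nat (leq_trans le_Mm) // leq_addl].
Qed.
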